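(* Let $G$ be an admissible graph, let $T$ be the adjacency matrix of its oriented line graph, let $\lambda>0$ be the largest eigenvalue of $T$, and let $\zeta_G(x)=\exp\left(\sum_{k=1}^\infty \frac{\operatorname{tr}(T^k)}{k}x^k\right)$ for $x\in[0,\frac{1}{\lambda})$. Fix $a$ with $0<a<\frac{1}{\lambda}$ and define $s:[0,1]\to\mathbb{R}$ by $$s(p)=p\cdot\frac{\zeta_G(a)+1-\left(\zeta_G(ap)+p\right)}{1+a\zeta_G'(a)}.$$ Then $s$ has a global maximum in $(0,1)$; that is, there exists $c\in(0,1)$ with $s(c)\ge s(p)$ for all $p\in[0,1]$.
   Context: An admissible graph is a simple, finite, connected, undirected graph with no vertex of degree one which is neither a cycle graph nor a path graph. If $G$ has $m$ edges, let $\mathcal{E}=\{e^{(1)},\dots,e^{(2m)}\}$ be the set of its $2m$ oriented edges (each undirected edge $\{u,v\}$ gives the two directed edges $(u,v)$ and $(v,u)$; for $e=(u,v)$ write $i(e)=u$, $t(e)=v$). The oriented line graph $\overline{G}$ has vertex set $\mathcal{E}$ and a directed edge from $e$ to $f$ iff $t(e)=i(f)$ and $i(e)\neq t(f)$. $T$ is the $2m\times 2m$ $0/1$ adjacency matrix of $\overline{G}$. The function $\zeta_G$ is the Ihara zeta function of $G$ restricted to the real interval $[0,1/\lambda)$, where the defining series converges; $\zeta_G'$ is its derivative. *)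

From HB Require Import structures.
From mathcomp Require Import all_boot all_order all_algebra.
From mathcomp Require Import all_classical all_reals all_analysis.
Set Implicit Arguments. Unset Strict Implicit. Unset Printing Implicit Defensive.
Import Order.TTheory GRing.Theory Num.Theory.
Local Open Scope ring_scope.

Section Graph.
Variables (V : finType) (e : rel V).

Definition simple_graph : Prop := symmetric e /\ irreflexive e.
Definition connected_graph : Prop := forall x y, connect e x y.
Definition degree (x : V) : nat := #|[set y | e x y]|.

Definition path_graph : Prop :=
  exists n (f : 'I_n -> V), bijective f /\
    forall i j : 'I_n, e (f i) (f j) = ((i.+1 == j) || (j.+1 == i))%N.

Definition cycle_graph : Prop :=
  exists n (f : 'I_n -> V), (3 <= n)%N /\ bijective f /\
    forall i j : 'I_n, e (f i) (f j) =
      ((j == i.+1 %% n :> nat) || (i == j.+1 %% n :> nat))%N.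

Definition admissible : Prop :=
  [/\ simple_graph, connected_graph, (forall x, degree x != 1%N),
      ~ cycle_graph & ~ path_graph].

Definition oedge := {x : V * V | e x.1 x.2}.
Definition oinit (d : oedge) : V := (val d).1.
Definition oterm (d : oedge) : V := (val d).2.

Definition Tmat (R : realType) : 'M[R]_#|{: oedge}| :=
  \matrix_(i, j) ((oterm (enum_val i) == oinit (enum_val j)) &&
                  (oinit (enum_val i) != oterm (enum_val j)))%:R.

Definition mxpow (R : realType) n (M : 'M[R]_n) (k : nat) : 'M[R]_n :=
  iter k (fun A => A *m M) 1%:M.

Definition zetaG (R : realType) (x : R) : R :=
  expR (\big[+%R/0%R]_(1 <= k <oo) (\tr (mxpow (Tmat R) k) / k%:R * x ^+ k)).

End Graph.

Definition s_fun (R : realType) (V : finType) (e : rel V) (a p : R) : R :=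
  p * ((zetaG e a + 1 - (zetaG e (a * p) + p)) / (1 + a * derive1 (fun x : R => zetaG e x) a)).

From HB Require Import structures.
From mathcomp Require Import all_boot all_order all_algebra.
From mathcomp Require Import all_classical all_reals all_analysis.
From mathcomp Require Import ring lra.
Import Order.TTheory GRing.Theory Num.Theory numFieldNormedType.Exports.
Set Implicit Arguments. Unset Strict Implicit. Unset Printing Implicit Defensive.
Local Open Scope classical_set_scope. Local Open Scope ring_scope.

(* Write zeta_G = exp L with L(x) = sum_(k >= 1) tr(T^k) x^k / k.  For 0 <= x < 1/lam
   the matrix 1 - xT is invertible, since 1/x > lam is not a real eigenvalue of T.
   Its inverse is entrywise nonnegative: it is so at x = 0, and a Neumann-series
   perturbation of a nonnegative inverse stays nonnegative over a step whose length
   only depends on the norm of the inverse, which is locally bounded.  The identity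
   (1 - xT) (sum_(k < N) (xT)^k) = 1 - (xT)^N then bounds sum_(k < N) tr(T^k) x^k by
   tr (1 - xT)^-1, so L is finite, nondecreasing and Lipschitz on [0, a].  Hence
   p |-> zeta_G(a p) is continuous, zeta_G'(a) >= 0, the denominator of s is at
   least 1, and s is continuous on [0, 1] with s(0) = s(1) = 0 < s(1/2): its maximum
   is attained inside (0, 1). *)

Lemma ler_sum_from1 (R : numDomainType) (F : nat -> R) N : 0 <= F 0%N ->
  \sum_(1 <= k < N) F k <= \sum_(k < N) F k.
Proof.
move=> F0; rewrite -(big_mkord xpredT).
case: N => [|N]; first by rewrite !big_geq.
by rewrite [leRHS]big_ltn // lerDr.
Qed.

Lemma subrXX_le (R : realFieldType) (x y a : R) k : 0 <= x -> x <= y -> y <= a ->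
  y ^+ k - x ^+ k <= k%:R * a ^+ k.-1 * (y - x).
Proof.
move=> x0 xy ya; rewrite subrXX mulrC ler_wpM2r ?subr_ge0 //.
apply: (@le_trans _ _ (\sum_(i < k) a ^+ k.-1)); last first.
  by rewrite sumr_const card_ord mulr_natl.
apply: ler_sum => i _.
have ik : (i <= k.-1)%N by rewrite -ltnS prednK ?ltn_ord // (leq_ltn_trans _ (ltn_ord i)).
have -> : a ^+ k.-1 = a ^+ (k.-1 - i) * a ^+ i by rewrite -exprD subnK.
rewrite ler_pM ?exprn_ge0 // ?(le_trans x0 xy) //;
  by apply: lerXn2r; rewrite ?nnegrE; lra.
Qed.

Section LogSeries.
Variables (R : realType) (t : nat -> R) (rho : R).
Hypothesis t_ge0 : forall k, 0 <= t k.
Hypothesis gf_bounded : forall x, 0 <= x -> x < rho ->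
  exists C, forall N, \sum_(k < N) t k * x ^+ k <= C.

Definition lpartial (x : R) (N : nat) := \sum_(1 <= k < N) t k / k%:R * x ^+ k.
Definition lseries (x : R) := limn (lpartial x).

Lemma lpartial_nondecreasing x : 0 <= x -> nondecreasing_seq (lpartial x).
Proof.
move=> x0; apply/nondecreasing_seqP => N; rewrite /lpartial.
case: N => [|N]; first by rewrite !big_geq.
by rewrite [leRHS]big_nat_recr //= lerDl mulr_ge0 ?divr_ge0 ?exprn_ge0.
Qed.

Lemma lpartial_le_gf x N : 0 <= x -> lpartial x N <= \sum_(k < N) t k * x ^+ k.
Proof.
move=> x0; apply: (@le_trans _ _ (\sum_(1 <= k < N) t k * x ^+ k)).
  apply: ler_sum_nat => k /andP[k_gt0 _]; rewrite ler_wpM2r ?exprn_ge0 //.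
  by rewrite ler_pdivrMr ?ltr0n // ler_peMr // ler1n.
by apply: ler_sum_from1; rewrite mulr_ge0.
Qed.

Lemma lpartial_cvg x : 0 <= x -> x < rho -> cvgn (lpartial x).
Proof.
move=> x0 xr; have [C gfC] := gf_bounded x0 xr.
apply: nondecreasing_is_cvgn; first exact: lpartial_nondecreasing.
by exists C => _ [N _ <-]; apply: le_trans (lpartial_le_gf N x0) (gfC N).
Qed.

Lemma lpartial_le_lseries x N : 0 <= x -> x < rho -> lpartial x N <= lseries x.
Proof.
move=> x0 xr; apply: nondecreasing_cvgn_le; first exact: lpartial_nondecreasing.
exact: lpartial_cvg.
Qed.

Lemma lseries_le x B : 0 <= x -> x < rho -> (forall N, lpartial x N <= B) ->
  lseries x <= B.
Proof. by move=> x0 xr lpB; apply: limr_le; [exact: lpartial_cvg | exact: nearW]. Qed.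

Lemma lseries_le_homo x y : 0 <= x -> x <= y -> y < rho -> lseries x <= lseries y.
Proof.
move=> x0 xy yr; have y0 := le_trans x0 xy.
apply: lseries_le => [||N]; [by [] | exact: le_lt_trans yr |].
apply: le_trans (lpartial_le_lseries N y0 yr).
by apply: ler_sum_nat => k _; rewrite ler_wpM2l ?divr_ge0 //; apply: lerXn2r.
Qed.

Lemma lpartial_increment_le a x y N : 0 < a -> 0 <= x -> x <= y -> y <= a ->
  lpartial y N - lpartial x N <= (y - x) / a * \sum_(k < N) t k * a ^+ k.
Proof.
move=> a0 x0 xy ya; rewrite /lpartial -sumrB.
apply: (@le_trans _ _ ((y - x) / a * \sum_(1 <= k < N) t k * a ^+ k)).
  rewrite mulr_sumr; apply: ler_sum_nat => k /andP[k_gt0 _].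
  rewrite -mulrBr; apply: le_trans (_ : t k / k%:R * (k%:R * a ^+ k.-1 * (y - x)) <= _).
    by rewrite ler_wpM2l ?divr_ge0 // subrXX_le.
  have -> : a ^+ k = a * a ^+ k.-1 by rewrite -exprS prednK.
  rewrite [leRHS](_ : _ = t k / k%:R * (k%:R * a ^+ k.-1 * (y - x))) //.
  by field; rewrite pnatr_eq0 -lt0n k_gt0 gt_eqF.
apply: ler_wpM2l; first by rewrite divr_ge0 ?subr_ge0 // ltW.
by apply: ler_sum_from1; rewrite mulr_ge0.
Qed.

Lemma lseries_increment_le a C x y : 0 < a -> a < rho ->
  (forall N, \sum_(k < N) t k * a ^+ k <= C) -> 0 <= x -> x <= y -> y <= a ->
  lseries y - lseries x <= C / a * (y - x).
Proof.
move=> a0 ar gfC x0 xy ya; have yr : y < rho by apply: le_lt_trans ar.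
rewrite lerBlDl; apply: lseries_le => [||N]; [exact: le_trans x0 xy | by [] |].
have := lpartial_increment_le N a0 x0 xy ya.
have := lpartial_le_lseries N x0 (le_lt_trans xy yr).
have : (y - x) / a * \sum_(k < N) t k * a ^+ k <= (y - x) / a * C.
  by apply: ler_wpM2l; first by rewrite divr_ge0 ?subr_ge0 // ltW.
lra.
Qed.

Lemma lseries_lipschitz a : 0 < a -> a < rho -> exists K, K.-lipschitz_(`[0, a]) lseries.
Proof.
move=> a0 ar; have [C gfC] := gf_bounded (ltW a0) ar.
exists (C / a) => -[x y] /= [].
rewrite !in_itv /= => /andP[x0 xa] /andP[y0 ya].
wlog xy : x y x0 xa y0 ya / x <= y.
  move=> wlog_xy; have [|/ltW yx] := leP x y; first exact: wlog_xy.
  by rewrite distrC [`|x - y|]distrC; apply: wlog_xy.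
have := lseries_le_homo x0 xy (le_lt_trans ya ar).
rewrite distrC [`|x - y|]distrC -subr_ge0 => /ger0_norm ->.
by rewrite ger0_norm ?subr_ge0 // lseries_increment_le.
Qed.

End LogSeries.

Section NonnegMatrix.
Variables (R : realType) (n : nat).
Implicit Types (A B M T : 'M[R]_n).

Definition nonnegmx M := forall i j, 0 <= M i j.
Definition mxnorm1 M := \sum_i \sum_j `|M i j|.
Definition mxpow_sum A N := \sum_(k < N) mxpow A k.
Definition resolvent T (x : R) := invmx (1%:M - x *: T).

Lemma mxpowZ T x k : mxpow (x *: T) k = x ^+ k *: mxpow T k.
Proof.
elim: k => [|k IHk]; first by rewrite expr0 scale1r.
by rewrite /= IHk -scalemxAl -scalemxAr scalerA exprSr.
Qed.

Lemma mxpow_sum_mulBr A N : mxpow_sum A N *m (1%:M - A) = 1%:M - mxpow A N.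
Proof.
elim: N => [|N IHN]; first by rewrite /mxpow_sum big_ord0 mul0mx subrr.
rewrite /mxpow_sum big_ord_recr /= mulmxDl IHN mulmxBr mulmx1.
by rewrite addrA addrNK.
Qed.

Lemma mxpow_sumE A N : (1%:M - A) \in unitmx ->
  mxpow_sum A N = invmx (1%:M - A) - mxpow A N *m invmx (1%:M - A).
Proof.
move=> uA; have := congr1 (mulmx^~ (invmx (1%:M - A))) (mxpow_sum_mulBr A N).
by rewrite (mulmxK uA) mulmxBl mul1mx.
Qed.

Lemma invmx_linv A B : A \in unitmx -> B *m A = 1%:M -> invmx A = B.
Proof. by move=> uA BA; rewrite -[B]mulmx1 -(mulmxV uA) mulmxA BA mul1mx. Qed.

Lemma mxnorm1_ge0 M : 0 <= mxnorm1 M.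
Proof. by apply: sumr_ge0 => i _; apply: sumr_ge0. Qed.

Lemma ler_norm_mxnorm1 M i j : `|M i j| <= mxnorm1 M.
Proof.
rewrite /mxnorm1 (bigD1 i) //= (bigD1 j) //= -addrA lerDl.
by rewrite addr_ge0 ?sumr_ge0 // => k _; rewrite sumr_ge0.
Qed.

Lemma mxnorm1D A B : mxnorm1 (A + B) <= mxnorm1 A + mxnorm1 B.
Proof.
rewrite /mxnorm1 -big_split /=; apply: ler_sum => i _; rewrite -big_split /=.
by apply: ler_sum => j _; rewrite mxE ler_normD.
Qed.

Lemma mxnorm1Z c A : mxnorm1 (c *: A) = `|c| * mxnorm1 A.
Proof.
rewrite /mxnorm1 mulr_sumr; apply: eq_bigr => i _; rewrite mulr_sumr.
by apply: eq_bigr => j _; rewrite mxE normrM.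
Qed.

Lemma mxnorm1M A B : mxnorm1 (A *m B) <= mxnorm1 A * mxnorm1 B.
Proof.
have -> : mxnorm1 A * mxnorm1 B =
    \sum_i \sum_k \sum_l \sum_j `|A i k| * `|B l j|.
  rewrite mulr_suml; apply: eq_bigr => i _; rewrite mulr_suml.
  apply: eq_bigr => k _; rewrite mulr_sumr; apply: eq_bigr => l _.
  by rewrite mulr_sumr.
apply: ler_sum => i _.
apply: (@le_trans _ _ (\sum_k \sum_j `|A i k| * `|B k j|)).
  rewrite exchange_big /=; apply: ler_sum => j _; rewrite !mxE.
  apply: le_trans (ler_norm_sum _ _ _) _.
  by apply: ler_sum => k _; rewrite normrM.
apply: ler_sum => k _; rewrite [leRHS](bigD1 k) //= lerDl.
by apply: sumr_ge0 => l _; apply: sumr_ge0 => j _; apply: mulr_ge0.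
Qed.

Lemma mxnorm1_mxpowM A k M : mxnorm1 (mxpow A k *m M) <= mxnorm1 A ^+ k * mxnorm1 M.
Proof.
elim: k M => [|k IHk] M; first by rewrite /= mul1mx expr0 mul1r.
rewrite /= -mulmxA; apply: le_trans (IHk _) _.
by rewrite exprSr -mulrA ler_wpM2l ?exprn_ge0 ?mxnorm1_ge0 ?mxnorm1M.
Qed.

Lemma nonnegmx1 : nonnegmx 1%:M.
Proof. by move=> i j; rewrite mxE ler0n. Qed.

Lemma nonnegmxM A B : nonnegmx A -> nonnegmx B -> nonnegmx (A *m B).
Proof. by move=> A0 B0 i j; rewrite mxE sumr_ge0 // => k _; rewrite mulr_ge0. Qed.

Lemma nonnegmxZ c A : 0 <= c -> nonnegmx A -> nonnegmx (c *: A).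
Proof. by move=> c0 A0 i j; rewrite mxE mulr_ge0. Qed.

Lemma nonnegmx_mxpow A k : nonnegmx A -> nonnegmx (mxpow A k).
Proof. by move=> A0; elim: k => [|k IHk]; [exact: nonnegmx1 | exact: nonnegmxM]. Qed.

Lemma nonnegmx_mxpow_sum A N : nonnegmx A -> nonnegmx (mxpow_sum A N).
Proof.
by move=> A0 i j; rewrite summxE sumr_ge0 // => k _; apply: nonnegmx_mxpow.
Qed.

Lemma nonnegmx_inv_small B : nonnegmx B -> mxnorm1 B <= 2^-1 ->
  (1%:M - B) \in unitmx -> nonnegmx (invmx (1%:M - B)).
Proof.
move=> B0 B_small uB i j; set V := invmx (1%:M - B).
have half_norm : `|2^-1 : R| < 1 by rewrite ger0_norm ?invr_ge0 // invf_lt1 ?ltr1n.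
have geo_cvg0 : - ((2^-1) ^+ N * mxnorm1 V) @[N --> \oo] --> (0 : R).
  rewrite -oppr0 -(mul0r (mxnorm1 V)); apply: cvgN.
  by apply: cvgM; [exact: cvg_expr | exact: cvg_cst].
apply: (cvgr_to_le geo_cvg0); apply: nearW => N /=.
have -> : V i j = mxpow_sum B N i j + (mxpow B N *m V) i j.
  by rewrite mxpow_sumE // !mxE addrNK.
rewrite -[leLHS]add0r lerD ?nonnegmx_mxpow_sum //; apply: lerNnormlW.
apply: le_trans (ler_norm_mxnorm1 _ _ _) _; apply: le_trans (mxnorm1_mxpowM _ _ _) _.
by rewrite ler_wpM2r ?mxnorm1_ge0 //; apply: lerXn2r; rewrite ?nnegrE ?mxnorm1_ge0.
Qed.

Lemma resolvent0 T : resolvent T 0 = 1%:M.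
Proof. by rewrite /resolvent scale0r subr0 invmx1. Qed.

Lemma resolvent_identity T x r :
  (1%:M - x *: T) \in unitmx -> (1%:M - r *: T) \in unitmx ->
  resolvent T x = resolvent T r + (x - r) *: (resolvent T r *m T *m resolvent T x).
Proof.
move=> ux ur; apply/eqP; rewrite addrC -subr_eq; apply/eqP.
rewrite scalemxAl scalemxAr.
have <- : (1%:M - r *: T) - (1%:M - x *: T) = (x - r) *: T.
  by rewrite opprB addrC addrA subrK scalerBl.
rewrite mulmxBr mulmxBl (mulVmx ur) mul1mx -mulmxA.
by rewrite (mulmxV ux) mulmx1.
Qed.

Lemma mxnorm1_resolvent_perturb T x r :
  (1%:M - x *: T) \in unitmx -> (1%:M - r *: T) \in unitmx ->
  `|x - r| * mxnorm1 (resolvent T r) * mxnorm1 T <= 2^-1 ->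
  mxnorm1 (resolvent T x) <= 2 * mxnorm1 (resolvent T r).
Proof.
move=> ux ur small; set Wx := resolvent T x; set Wr := resolvent T r.
have : mxnorm1 Wx <= mxnorm1 Wr + 2^-1 * mxnorm1 Wx.
  rewrite {1}/Wx (resolvent_identity ux ur); apply: le_trans (mxnorm1D _ _) _.
  rewrite lerD2l mxnorm1Z.
  apply: (@le_trans _ _ (`|x - r| * (mxnorm1 Wr * mxnorm1 T * mxnorm1 Wx))).
    rewrite ler_wpM2l //; apply: le_trans (mxnorm1M _ _) _.
    by rewrite ler_wpM2r ?mxnorm1_ge0 ?mxnorm1M.
  by rewrite !mulrA ler_wpM2r ?mxnorm1_ge0.
have := mxnorm1_ge0 Wx; lra.
Qed.

Lemma resolvent_nonneg_step T x y : nonnegmx T -> 0 <= x -> x <= y ->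
  (1%:M - x *: T) \in unitmx -> (1%:M - y *: T) \in unitmx ->
  nonnegmx (resolvent T x) ->
  (y - x) * mxnorm1 (resolvent T x) * mxnorm1 T <= 2^-1 ->
  nonnegmx (resolvent T y).
Proof.
move=> T0 x0 xy ux uy Wx0 small; set Wx := resolvent T x.
set B := (y - x) *: (Wx *m T).
have factor : (1%:M - x *: T) *m (1%:M - B) = 1%:M - y *: T.
  rewrite mulmxBr mulmx1 /B -scalemxAr mulmxA (mulmxV ux) mul1mx.
  by rewrite scalerBl opprB addrA subrK.
have uB : (1%:M - B) \in unitmx by move: uy; rewrite -factor unitmx_mul => /andP[].
have -> : resolvent T y = invmx (1%:M - B) *m Wx.
  apply: invmx_linv => //; rewrite -factor mulmxA -(mulmxA _ Wx) (mulVmx ux).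
  by rewrite mulmx1 (mulVmx uB).
apply: nonnegmxM => //; apply: nonnegmx_inv_small => //.
  by apply: nonnegmxZ; [rewrite subr_ge0 | exact: nonnegmxM].
rewrite /B mxnorm1Z ger0_norm ?subr_ge0 //; apply: le_trans small.
by rewrite -mulrA ler_wpM2l ?subr_ge0 ?mxnorm1M.
Qed.

Lemma resolvent_nonneg_ahead T r x y d : nonnegmx T ->
  (1%:M - r *: T) \in unitmx -> (1%:M - x *: T) \in unitmx ->
  (1%:M - y *: T) \in unitmx ->
  0 <= x -> 0 <= r - x <= d -> x <= y <= x + d ->
  4 * d * (mxnorm1 (resolvent T r) * mxnorm1 T) <= 1 ->
  nonnegmx (resolvent T x) -> nonnegmx (resolvent T y).
Proof.
move=> T0 ur ux uy x0 /andP[xr rxd] /andP[xy yxd] small Wx0.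
set K := mxnorm1 (resolvent T r); set tau := mxnorm1 T.
have K0 : 0 <= K by exact: mxnorm1_ge0.
have tau0 : 0 <= tau by exact: mxnorm1_ge0.
have Wx_le : mxnorm1 (resolvent T x) <= 2 * K.
  apply: mxnorm1_resolvent_perturb => //; rewrite distrC ger0_norm //.
  have : (r - x) * (K * tau) <= d * (K * tau) by rewrite ler_wpM2r ?mulr_ge0.
  move: small; rewrite -/K -/tau mulrA; lra.
apply: (resolvent_nonneg_step T0 x0 xy ux uy Wx0).
have : (y - x) * (mxnorm1 (resolvent T x) * tau) <= d * (2 * K * tau).
  rewrite ler_pM ?mulr_ge0 ?subr_ge0 ?mxnorm1_ge0 //; first lra.
  by rewrite ler_wpM2r.
move: small; rewrite -/K -/tau !mulrA; lra.
Qed.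

Lemma resolvent_nonneg T b : nonnegmx T -> 0 <= b ->
  (forall x, 0 <= x -> x <= b -> (1%:M - x *: T) \in unitmx) ->
  nonnegmx (resolvent T b).
Proof.
move=> T0 b0 unitT.
(* Near r = sup A the resolvent is nonnegative at some x > r - d, and the step of
   length d from x then overshoots r unless it reaches b. *)
pose A := [set x | 0 <= x <= b /\ nonnegmx (resolvent T x)].
have A0 : A 0 by split; [rewrite lexx b0 | rewrite resolvent0; exact: nonnegmx1].
have supA : has_sup A by split; [exists 0 | exists b => x [/andP[]]].
set r := sup A.
have r0 : 0 <= r by exact: sup_upper_bound.
have rb : r <= b by apply: ge_sup => [|x [/andP[]]]; first by exists 0.
set Ktau := mxnorm1 (resolvent T r) * mxnorm1 T.
have Ktau0 : 0 <= Ktau by rewrite mulr_ge0 ?mxnorm1_ge0.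
set d := (4 * (Ktau + 1))^-1.
have d0 : 0 < d by rewrite invr_gt0; lra.
have d_small : 4 * d * Ktau <= 1.
  have : d * (4 * (Ktau + 1)) = 1 by rewrite /d mulVf // gt_eqF //; lra.
  lra.
have [x [/andP[x0 xb] Wx0]] := sup_adherent d0 supA; rewrite -/r => rdx.
have xr : x <= r by apply: sup_upper_bound => //; split; [rewrite x0 xb | exact: Wx0].
set y := Num.min b (x + d).
have y0 : 0 <= y by rewrite le_min b0 /=; lra.
have yb : y <= b by rewrite ge_min lexx.
have Wy0 : nonnegmx (resolvent T y).
  apply: (@resolvent_nonneg_ahead T r x y d T0 (unitT r r0 rb) (unitT x x0 xb)
    (unitT y y0 yb)) => //.
  - by rewrite subr_ge0 xr /=; lra.
  - by rewrite le_min xb ge_min lexx orbT /=; lra.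
have [bxd|xdb] := lerP b (x + d); first by move: Wy0; rewrite /y min_l.
have : y <= r by apply: sup_upper_bound => //; split; [rewrite y0 yb | exact: Wy0].
rewrite /y min_r; lra.
Qed.

Lemma tr_gf_le_tr_resolvent T x N : nonnegmx T -> 0 <= x ->
  (1%:M - x *: T) \in unitmx -> nonnegmx (resolvent T x) ->
  \sum_(k < N) \tr (mxpow T k) * x ^+ k <= \tr (resolvent T x).
Proof.
move=> T0 x0 ux Wx0.
under eq_bigr do rewrite mulrC -mxtraceZ -mxpowZ.
rewrite -raddf_sum -/(mxpow_sum _ N) mxpow_sumE // raddfB /= lerBlDr lerDl.
by apply: sumr_ge0 => i _; apply: nonnegmxM => //; apply/nonnegmx_mxpow/nonnegmxZ.
Qed.

Lemma unitmx_1subZ T lam x : 0 <= x -> x * lam < 1 ->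
  (forall mu, eigenvalue T mu -> mu <= lam) -> (1%:M - x *: T) \in unitmx.
Proof.
move=> x0 xlam eig_le.
have [->|xn0] := eqVneq x 0; first by rewrite scale0r subr0 unitmx1.
apply: contraT => non_unit.
have : eigenvalue T x^-1.
  rewrite /eigenvalue /eigenspace kermx_eq0 row_free_unit.
  have -> : T - x^-1%:M = (- x^-1) *: (1%:M - x *: T).
    by rewrite scalerBr scalemx1 scalerA mulNr mulVf // scaleN1r opprK addrC raddfN.
  by rewrite unitmxZ // unitfE oppr_eq0 invr_eq0.
move/eig_le => inv_le_lam.
have : x * x^-1 <= x * lam by apply: ler_wpM2l.
rewrite mulfV //; lra.
Qed.

End NonnegMatrix.

Lemma derive1_ge0_nondecreasing (R : realType) (f : R -> R) (a d : R) : 0 < d ->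
  (forall x y, a - d < x -> x <= y -> y < a + d -> f x <= f y) -> 0 <= derive1 f a.
Proof.
move=> d0 f_homo; rewrite /derive1.
have [dq_cvg|dq_ncvg] := pselect (cvg ((fun h => h^-1 *: (f (h + a) - f a)) @ 0^')).
  apply: limr_ge => //; apply: filterS (dnbhs0_lt d0) => h.
  rewrite ltr_norml => /andP[dh hd]; have [h0|h0] := lerP 0 h.
    apply: mulr_ge0; first by rewrite invr_ge0.
    by rewrite subr_ge0 f_homo //; lra.
  apply: mulr_le0; first by rewrite invr_le0 ltW.
  by rewrite subr_le0 f_homo //; lra.
(* a non-convergent difference quotient makes [derive1] the default value [0] *)
rewrite /lim /lim_in getPN // => l dq_l; apply: dq_ncvg; by apply/cvg_ex; exists l.
Qed.

Lemma lipschitz_within_continuous (R : realType) (A : set R) (f : R -> R) k :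
  k.-lipschitz_A f -> {within A, continuous f}.
Proof.
move=> f_lip; apply/subspace_continuousP => x Ax; apply/cvgrPdist_le => e e0.
have k1 : 0 < `|k| + 1 by rewrite ltr_wpDl.
rewrite near_withinE; exists (e / (`|k| + 1)); first by rewrite /= divr_gt0.
move=> y /= xy Ay; apply: le_trans (f_lip (x, y) (conj Ax Ay)) _.
apply: (@le_trans _ _ (`|k| * (e / (`|k| + 1)))).
  apply: le_trans (_ : `|k| * `|x - y| <= _); first by rewrite ler_wpM2r ?ler_norm.
  by rewrite ler_wpM2l // ltW.
by rewrite mulrA ler_pdivrMr //; lra.
Qed.

Lemma EVT_max_interior (R : realType) (f : R -> R) (a b m : R) :
  {within `[a, b], continuous f} -> a <= m <= b -> f a < f m -> f b < f m ->
  exists c, a < c < b /\ forall p, a <= p <= b -> f p <= f c.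
Proof.
move=> f_cont /andP[am mb] fa_lt fb_lt.
have [c] := EVT_max (le_trans am mb) f_cont.
rewrite in_itv /= => /andP[ac cb] c_max.
have fm_le : f m <= f c by apply: c_max; rewrite in_itv /= am mb.
exists c; split; last by move=> p abp; apply: c_max; rewrite in_itv.
rewrite !lt_neqAle ac cb !andbT; apply/andP; split; apply/eqP => ec.
  by move: fa_lt; rewrite ec; lra.
by move: fb_lt; rewrite -ec; lra.
Qed.

Section IharaZeta.
Variables (R : realType) (V : finType) (e : rel V) (lam : R).
Hypothesis lam_gt0 : 0 < lam.
Hypothesis eig_le_lam : forall mu, eigenvalue (Tmat e R) mu -> mu <= lam.

Let trT k := \tr (mxpow (Tmat e R) k).

Lemma Tmat_nonneg : nonnegmx (Tmat e R).
Proof. by move=> i j; rewrite mxE ler0n. Qed.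

Lemma tr_mxpow_Tmat_ge0 k : 0 <= trT k.
Proof. by rewrite /trT /mxtrace sumr_ge0 // => i _; apply/nonnegmx_mxpow/Tmat_nonneg. Qed.

Lemma Tmat_gf_bounded x : 0 <= x -> x < lam^-1 ->
  exists C, forall N, \sum_(k < N) trT k * x ^+ k <= C.
Proof.
move=> x0 x_lt; have unitT y : 0 <= y -> y <= x -> (1%:M - y *: Tmat e R) \in unitmx.
  move=> y0 yx; apply: (unitmx_1subZ y0 _ eig_le_lam).
  by rewrite -(mulVf (lt0r_neq0 lam_gt0)) ltr_pM2r // (le_lt_trans yx).
exists (\tr (resolvent (Tmat e R) x)) => N.
apply: tr_gf_le_tr_resolvent; [exact: Tmat_nonneg | by [] | exact: unitT |].
exact: resolvent_nonneg Tmat_nonneg x0 unitT.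
Qed.

Lemma zetaGE x : zetaG e x = expR (lseries trT x).
Proof. by []. Qed.

Lemma zetaG_le_homo x y : 0 <= x -> x <= y -> y < lam^-1 -> zetaG e x <= zetaG e y.
Proof.
move=> x0 xy y_lt; rewrite !zetaGE ler_expR.
exact: lseries_le_homo tr_mxpow_Tmat_ge0 Tmat_gf_bounded _ _ x0 xy y_lt.
Qed.

Lemma derive1_zetaG_ge0 a : 0 < a -> a < lam^-1 ->
  0 <= derive1 (fun x : R => zetaG e x) a.
Proof.
move=> a0 a_lt; set d := Num.min a (lam^-1 - a).
have da : d <= a by rewrite ge_min lexx.
have d_rho : d <= lam^-1 - a by rewrite ge_min lexx orbT.
apply: (@derive1_ge0_nondecreasing _ _ _ d); first by rewrite lt_min a0 subr_gt0.
by move=> x y ax xy ya; apply: zetaG_le_homo => //; lra.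
Qed.

Lemma zetaG_scale_continuous a : 0 < a -> a < lam^-1 ->
  {within `[0, 1], continuous (fun p => zetaG e (a * p))}.
Proof.
move=> a0 a_lt; have a_ge0 := ltW a0.
have [K L_lip] := lseries_lipschitz tr_mxpow_Tmat_ge0 Tmat_gf_bounded a0 a_lt.
have La_lip : (K * a).-lipschitz_(`[0, 1]) (fun p => lseries trT (a * p)).
  move=> [p q] /= []; rewrite !in_itv /= => /andP[p0 p1] /andP[q0 q1].
  have scale_in r : 0 <= r <= 1 -> a * r \in `[0, a].
    by case/andP => r0 r1; rewrite in_itv /= mulr_ge0 ?ler_piMr.
  apply: le_trans (L_lip (a * p, a * q) (conj (scale_in p _) (scale_in q _))) _.
  - by rewrite p0.
  - by rewrite q0.
  by rewrite /= -mulrBr normrM (gtr0_norm a0) mulrA.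
apply: (@within_continuous_comp _ _ _ _ (fun q => lseries trT (a * q)) expR).
  by move=> ? _; exact: continuous_expR.
exact: lipschitz_within_continuous La_lip.
Qed.

Lemma s_fun_continuous a : 0 < a -> a < lam^-1 ->
  {within `[0, 1], continuous (s_fun e a)}.
Proof.
move=> a0 a_lt; have Zc := zetaG_scale_continuous a0 a_lt.
have idc : {within `[0, 1], continuous (fun p : R => p)}.
  by apply: continuous_subspaceT => x; exact: cvg_id.
move=> p; rewrite /s_fun; apply: cvgM; first exact: idc.
apply: cvgM; last exact: cvg_cst.
apply: cvgD; first exact: cvg_cst.
by apply: cvgN; apply: cvgD; [exact: Zc | exact: idc].
Qed.

Lemma s_fun_half_gt0 a : 0 < a -> a < lam^-1 -> 0 < s_fun e a 2^-1.
Proof.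
move=> a0 a_lt; apply: mulr_gt0; first by rewrite invr_gt0.
have Z_half_le : zetaG e (a * 2^-1) <= zetaG e a.
  by apply: zetaG_le_homo; rewrite ?mulr_ge0 ?ler_piMr ?invf_le1 ?ler1n ?ltW.
have aD := mulr_ge0 (ltW a0) (derive1_zetaG_ge0 a0 a_lt).
by apply: divr_gt0; lra.
Qed.

End IharaZeta.

Lemma s_fun0 (R : realType) (V : finType) (e : rel V) (a : R) : s_fun e a 0 = 0.
Proof. by rewrite /s_fun mul0r. Qed.

Lemma s_fun1 (R : realType) (V : finType) (e : rel V) (a : R) : s_fun e a 1 = 0.
Proof. by rewrite /s_fun mulr1 subrr mul0r mul1r. Qed.

Theorem theorem1 (R : realType) (V : finType) (e : rel V)
  (hG : admissible e) (lam : R)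
  (hlam_pos : 0 < lam)
  (hlam_eig : eigenvalue (Tmat e R) lam)
  (hlam_max : forall mu : R, eigenvalue (Tmat e R) mu -> mu <= lam)
  (a : R) (ha0 : 0 < a) (ha1 : a < lam^-1) :
  exists c : R, 0 < c < 1 /\
    forall p : R, 0 <= p <= 1 -> s_fun e a p <= s_fun e a c.
Proof.
have half_pos := s_fun_half_gt0 hlam_pos hlam_max ha0 ha1.
apply: (EVT_max_interior (m := 2^-1) (s_fun_continuous hlam_pos hlam_max ha0 ha1)).
- by rewrite invr_ge0 ler0n invf_le1 ?ler1n.
- by rewrite s_fun0.
- by rewrite s_fun1.
Qed.
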